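(* Let $h_1,\dots,h_{2k}$ satisfy the FFD relations with $h_j^2=b_j^2\mathbb{1}$, $b_j\neq0$, and let $\theta_1,\dots,\theta_{2k}$ be arbitrary complex numbers with $\cos\theta_j\neq0$. Write $c_j:=\cos\theta_j$, $h'_j:=\sin\theta_j\,b_j^{-1}h_j$, with the conventions $c_j:=1$, $h'_j:=0$ for $j\le0$. Then $$\mathcal{V}_{2k}=\mathcal{V}_{2k-2}+\big(c_{2k-2}h'_{2k}+c_{2k}c_{2k-2}c_{2k-3}h'_{2k-1}+c_{2k-5}h'_{2k-2}h'_{2k-3}h'_{2k}\big)\mathcal{V}_{2k-4}+c_{2k-4}c_{2k-5}h'_{2k}h'_{2k-3}\mathcal{V}_{2k-6}+c_{2k-4}c_{2k-5}c_{2k-6}c_{2k-7}h'_{2k-5}h'_{2k-2}h'_{2k-3}h'_{2k}\mathcal{V}_{2k-8},$$ and $$\mathcal{V}_{2k-1}=\mathcal{V}_{2k-2}+c_{2k-2}c_{2k-3}h'_{2k-1}\mathcal{V}_{2k-4},$$ where $\mathcal{V}_j:=\mathbb{1}$ for $j\le0$.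
   Context: FFD relations: $h_mh_{m+1}=-h_{m+1}h_m$, $h_mh_{m+2}=-h_{m+2}h_m$, $h_mh_l=h_lh_m$ for $|l-m|>2$, $h_m^2=b_m^2\mathbb{1}$, in a unital associative complex algebra. Local gates $g_j:=\cos(\theta_j/2)\mathbb{1}+\sin(\theta_j/2)\,b_j^{-1}h_j$. For $1\le n\le k$: $G_{2n}:=(g_2g_1)(g_4g_3)\cdots(g_{2n}g_{2n-1})$, $G_{2n}^{\top}:=(g_{2n-1}g_{2n})\cdots(g_3g_4)(g_1g_2)$ (reversed order), $\mathcal{V}_{2n}:=G_{2n}G_{2n}^{\top}$; $G_{2n-1}$ and $\mathcal{V}_{2n-1}$ are obtained from $G_{2n}$, $\mathcal{V}_{2n}$ by setting $\theta_{2n}=0$ (i.e. $g_{2n}=\mathbb{1}$). All $\mathcal{V}_j$ use the same angles $\theta_1,\theta_2,\dots$. *)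

From mathcomp Require Import all_boot all_algebra.
From mathcomp Require Import reals sequences exp trigo.
From mathcomp Require Export complex.
Set Implicit Arguments. Unset Strict Implicit. Unset Printing Implicit Defensive.
Import GRing.Theory.
Local Open Scope ring_scope.
Local Open Scope complex_scope.

Definition Rcosh (R : realType) (y : R) : R := (expR y + expR (- y)) / 2.
Definition Rsinh (R : realType) (y : R) : R := (expR y - expR (- y)) / 2.

Definition Ccos (R : realType) (z : R[i]) : R[i] :=
  (cos (Re z) * Rcosh (Im z)) -i* (sin (Re z) * Rsinh (Im z)).
Definition Csin (R : realType) (z : R[i]) : R[i] :=
  (sin (Re z) * Rcosh (Im z)) +i* (cos (Re z) * Rsinh (Im z)).

Section FFD.
Variables (R : realType) (A : algType R[i]).
Variables (h : nat -> A) (b : nat -> R[i]).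

Definition FFD (N : nat) : Prop :=
  [/\ (forall m, (1 <= m)%N -> (m + 1 <= N)%N -> h m * h (m + 1) = - (h (m + 1) * h m)),
      (forall m, (1 <= m)%N -> (m + 2 <= N)%N -> h m * h (m + 2) = - (h (m + 2) * h m)),
      (forall m l, (1 <= m <= N)%N -> (1 <= l <= N)%N ->
          ((m + 2 < l)%N || (l + 2 < m)%N) -> h m * h l = h l * h m)
    & (forall m, (1 <= m <= N)%N -> h m ^+ 2 = b m ^+ 2 *: 1)].

Definition gate (theta : nat -> R[i]) (j : nat) : A :=
  Ccos (theta j / 2) *: 1 + (Csin (theta j / 2) / b j) *: h j.

(* G_{2n} = (g2 g1)(g4 g3)...(g_{2n} g_{2n-1}) *)
Definition Gev (theta : nat -> R[i]) (n : nat) : A :=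
  \prod_(i < n) (gate theta (i.*2 + 2) * gate theta (i.*2 + 1)).

(* G_{2n}^T = (g_{2n-1} g_{2n}) ... (g3 g4)(g1 g2) *)
Definition GevT (theta : nat -> R[i]) (n : nat) : A :=
  \prod_(i < n) (gate theta ((n - i).*2 - 1) * gate theta ((n - i).*2)).

Definition Vev (theta : nat -> R[i]) (n : nat) : A := Gev theta n * GevT theta n.

(* V_{2n-1} : V_{2n} with theta_{2n} set to 0 *)
Definition Vodd (theta : nat -> R[i]) (n : nat) : A :=
  Vev (fun j => if j == n.*2 then 0 else theta j) n.

(* V_j for all j : nat, with V_0 = 1 (convention V_j = 1 for j <= 0;
   negative indices are handled by truncated subtraction in nat) *)
Definition V (theta : nat -> R[i]) (j : nat) : A :=
  if j == 0%N then 1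
  else if odd j then Vodd theta (j.+1)./2 else Vev theta j./2.

Definition cc (theta : nat -> R[i]) (j : nat) : R[i] :=
  if j == 0%N then 1 else Ccos (theta j).

Definition hp (theta : nat -> R[i]) (j : nat) : A :=
  if j == 0%N then 0 else (Csin (theta j) / b j) *: h j.

End FFD.

From mathcomp Require Import all_boot all_algebra.
From mathcomp Require Import reals complex sequences exp trigo.
From mathcomp Require Import ring zify ssrAC.
Set Implicit Arguments. Unset Strict Implicit.
Import GRing.Theory Num.Theory.
Local Open Scope ring_scope.

(* Normalising u_j := b_j^-1 h_j gives u_j^2 = 1, and then g_j = a_j + s_j u_j with
   a_j = cos(theta_j/2), s_j = sin(theta_j/2) satisfies g_j^2 = 1 + sin theta_j u_j and
   (a_j - s_j u_j) g_j = cos theta_j.  V_{2m+2} is V_{2m} with its middle factor 1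
   replaced by g_{2m+2} g_{2m+1} g_{2m+1} g_{2m+2}.  A monomial in the u_j commutes or
   anticommutes with each generator; a gate passes unchanged through a monomial that
   commutes with its generator, while through an anticommuting one it turns into
   a_j - s_j u_j, which then meets the mirror gate and collapses to cos theta_j.
   Expanding the middle factor and pushing the resulting monomials through the next
   two or three layers of gates gives the recursion; V_{2k-1} is the same computation
   with g_{2k} = 1. *)

Section Anticommutation.
Variable A : pzRingType.

Definition anticomm (x y : A) := x * y = - (y * x).

Lemma anticomm_sym x y : anticomm x y -> anticomm y x.
Proof. by rewrite /anticomm => ->; rewrite opprK. Qed.

Lemma anticomm2M x y z : anticomm x z -> anticomm y z -> GRing.comm (x * y) z.
Proof. by move=> xz yz; rewrite /GRing.comm -mulrA yz mulrN !mulrA xz mulNr opprK. Qed.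

Lemma comm_anticommM x y z : GRing.comm x z -> anticomm y z -> anticomm (x * y) z.
Proof. by move=> xz yz; rewrite /anticomm -mulrA yz mulrN !mulrA xz. Qed.

Lemma anticomm_commM x y z : anticomm x z -> GRing.comm y z -> anticomm (x * y) z.
Proof. by move=> xz yz; rewrite /anticomm -mulrA yz !mulrA xz mulNr. Qed.

End Anticommutation.

Lemma mul_affine (K : comPzRingType) (A : algType K) (a b c d q : K) (v : A) :
  v * v = q *: 1 ->
  (a *: 1 + b *: v) * (c *: 1 + d *: v) = (a * c + b * d * q) *: 1 + (a * d + b * c) *: v.
Proof.
move=> vv; rewrite mulrDr !mulrDl -!scalerAl -!scalerAr !mul1r !mulr1 vv !scalerA.
by rewrite !scalerDl (AC (2*2) ((1*4)*(3*2)))%AC.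
Qed.

Section Layers.
Variables (A : pzRingType) (gt : nat -> A).

Definition Gprod m := \prod_(i < m) (gt (i.*2 + 2)%N * gt (i.*2 + 1)%N).
Definition GprodT m := \prod_(i < m) (gt ((m - i).*2 - 1)%N * gt ((m - i).*2)%N).

Lemma GprodS m : Gprod m.+1 = Gprod m * (gt m.*2.+2 * gt m.*2.+1).
Proof. by rewrite /Gprod big_ord_recr /= addn2 addn1. Qed.

Lemma GprodTS m : GprodT m.+1 = (gt m.*2.+1 * gt m.*2.+2) * GprodT m.
Proof. by rewrite /GprodT big_ord_recl subn0 doubleS subSS subn0. Qed.

End Layers.

Lemma eq_Gprod (A : pzRingType) (gt1 gt2 : nat -> A) m :
  (forall j, (j <= m.*2)%N -> gt1 j = gt2 j) ->
  Gprod gt1 m = Gprod gt2 m /\ GprodT gt1 m = GprodT gt2 m.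
Proof.
move=> E; split; apply: eq_bigr => i _; rewrite !E //.
all: rewrite -?muln2; have := ltn_ord i; lia.
Qed.

Section Brickwork.
Variables (K : comPzRingType) (A : algType K).
Variables (u : nat -> A) (al be : nat -> K) (N : nat).
Hypothesis u_sqr : forall j, (1 <= j <= N)%N -> u j * u j = 1.
Hypothesis u_anticomm1 :
  forall j, (1 <= j)%N -> (j + 1 <= N)%N -> anticomm (u j) (u (j + 1)).
Hypothesis u_anticomm2 :
  forall j, (1 <= j)%N -> (j + 2 <= N)%N -> anticomm (u j) (u (j + 2)).
Hypothesis u_comm_far : forall i j, (1 <= i <= N)%N -> (1 <= j <= N)%N ->
  ((i + 2 < j)%N || (j + 2 < i)%N) -> GRing.comm (u i) (u j).
Hypothesis al_be_pythag : forall j, al j ^+ 2 + be j ^+ 2 = 1.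

Lemma u_anticomm i j : (1 <= i <= N)%N -> (1 <= j <= N)%N ->
  (i + 1 = j \/ i + 2 = j \/ j + 1 = i \/ j + 2 = i)%N -> anticomm (u i) (u j).
Proof.
move=> Hi Hj; case=> [E|[E|[E|E]]]; subst.
- by apply: u_anticomm1; lia.
- by apply: u_anticomm2; lia.
- by apply/anticomm_sym/u_anticomm1; lia.
- by apply/anticomm_sym/u_anticomm2; lia.
Qed.

Lemma u_comm i j : (1 <= i <= N)%N -> (1 <= j <= N)%N ->
  (i = j \/ i + 2 < j \/ j + 2 < i)%N -> GRing.comm (u i) (u j).
Proof.
move=> Hi Hj [->|[E|E]]; first exact: commr_refl.
all: by apply: u_comm_far => //; rewrite E ?orbT.
Qed.

Definition g j := locked (al j *: 1 + be j *: u j).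
Definition gbar j := locked (al j *: 1 + (- be j) *: u j).
Definition cosd j := locked (al j ^+ 2 - be j ^+ 2).
Definition sind j := locked (2 * al j * be j).

Lemma comm_g x j : GRing.comm x (u j) -> GRing.comm x (g j).
Proof.
by move=> xu; rewrite /GRing.comm /g -lock mulrDr mulrDl -!scalerAl -!scalerAr mulr1 mul1r xu.
Qed.

Lemma anticomm_g x j : anticomm x (u j) -> x * g j = gbar j * x /\ g j * x = x * gbar j.
Proof.
move=> xu; rewrite /g /gbar -!lock !mulrDr !mulrDl -!scalerAl -!scalerAr !mulr1 !mul1r xu.
by rewrite !scaleNr scalerN opprK.
Qed.

Lemma g_sqr j : (1 <= j <= N)%N -> g j * g j = 1 + sind j *: u j.
Proof.
move=> Hj; rewrite /g -lock (@mul_affine _ _ _ _ _ _ 1) ?u_sqr ?scale1r //.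
have -> : al j * al j + be j * be j * 1 = 1 by rewrite mulr1 -(al_be_pythag j) !expr2.
have -> : al j * be j + be j * al j = sind j by rewrite /sind -lock; ring.
by rewrite scale1r.
Qed.

Lemma gbar_g j : (1 <= j <= N)%N -> gbar j * g j = cosd j *: 1.
Proof.
move=> Hj; rewrite /g /gbar -!lock (@mul_affine _ _ _ _ _ _ 1) ?u_sqr ?scale1r //.
have -> : al j * be j + - be j * al j = 0 by ring.
have -> : al j * al j + - be j * be j * 1 = cosd j by rewrite /cosd -lock; ring.
by rewrite scale0r addr0.
Qed.

Definition pair_sandwich m y := g m.*2.+2 * g m.*2.+1 * y * (g m.*2.+1 * g m.*2.+2).

Section Pair.
Variable m : nat.
Hypothesis m_le : (m.*2.+2 <= N)%N.
Local Notation a := m.*2.+2.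
Local Notation b := m.*2.+1.

Let a_range : (1 <= a <= N)%N. Proof. lia. Qed.
Let b_range : (1 <= b <= N)%N. Proof. lia. Qed.
Let u_ba : anticomm (u b) (u a). Proof. by apply: u_anticomm; lia. Qed.

Lemma pair_sandwich_cc y : GRing.comm y (u a) -> GRing.comm y (u b) ->
  pair_sandwich m y = y * (1 + sind a *: u a + (cosd a * sind b) *: u b).
Proof.
move=> ya yb; have ca := comm_g ya; have cb := comm_g yb.
rewrite /pair_sandwich -[g a * g b * y]mulrA -cb [g a * (y * g b)]mulrA -ca -!mulrA.
congr (y * _); have [_ ab] := anticomm_g u_ba.
rewrite [g b * (g b * _)]mulrA (g_sqr b_range) mulrDl mul1r mulrDr (g_sqr a_range).
rewrite -scalerAl -scalerAr mulrA ab -mulrA (gbar_g a_range) -scalerAr mulr1 scalerA.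
by rewrite mulrC.
Qed.

Lemma pair_sandwich_ac y : anticomm y (u a) -> GRing.comm y (u b) ->
  pair_sandwich m y = y * (cosd a *: 1 + sind b *: u b + (sind b * sind a) *: (u b * u a)).
Proof.
move=> ya yb; have [_ ca] := anticomm_g ya; have cb := comm_g yb.
rewrite /pair_sandwich -[g a * g b * y]mulrA -cb [g a * (y * g b)]mulrA ca -!mulrA.
congr (y * _); have [ba _] := anticomm_g u_ba.
rewrite [g b * (g b * _)]mulrA (g_sqr b_range) mulrDl mul1r mulrDr (gbar_g a_range).
rewrite -scalerAl -scalerAr mulrA -ba -mulrA (g_sqr a_range) mulrDr mulr1 -scalerAr.
by rewrite scalerDr scalerA addrA.
Qed.

Lemma pair_sandwich_ca y : GRing.comm y (u a) -> anticomm y (u b) ->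
  pair_sandwich m y = cosd b *: (y * (1 + sind a *: u a)).
Proof.
move=> ya yb; have ca := comm_g ya; have [_ cb] := anticomm_g yb.
rewrite /pair_sandwich -[g a * g b * y]mulrA cb !mulrA -[_ * gbar b * g b]mulrA.
by rewrite (gbar_g b_range) -scalerAr mulr1 -scalerAl -ca -mulrA (g_sqr a_range).
Qed.

Lemma pair_sandwich_aa y : anticomm y (u a) -> anticomm y (u b) ->
  pair_sandwich m y = (cosd a * cosd b) *: y.
Proof.
move=> ya yb; have [_ ca] := anticomm_g ya; have [_ cb] := anticomm_g yb.
rewrite /pair_sandwich -[g a * g b * y]mulrA cb !mulrA -[_ * gbar b * g b]mulrA.
rewrite (gbar_g b_range) -scalerAr mulr1 -scalerAl ca -mulrA (gbar_g a_range).
by rewrite -scalerAr mulr1 scalerA mulrC.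
Qed.

End Pair.

Definition sandwich m y := Gprod g m * y * GprodT g m.
Definition Veven m := sandwich m 1.

Lemma sandwich0 y : sandwich 0 y = y.
Proof. by rewrite /sandwich /Gprod /GprodT !big_ord0 mul1r mulr1. Qed.

Lemma sandwichS m y : sandwich m.+1 y = sandwich m (pair_sandwich m y).
Proof. by rewrite /sandwich /pair_sandwich GprodS GprodTS !mulrA. Qed.

Lemma sandwichD m x y : sandwich m (x + y) = sandwich m x + sandwich m y.
Proof. by rewrite /sandwich mulrDr mulrDl. Qed.

Lemma sandwichZ m c y : sandwich m (c *: y) = c *: sandwich m y.
Proof. by rewrite /sandwich -scalerAr -scalerAl. Qed.

Lemma Veven0 : Veven 0 = 1.
Proof. exact: sandwich0. Qed.

Lemma sandwich_mull m x y : (forall j, (1 <= j <= m.*2)%N -> GRing.comm x (u j)) ->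
  sandwich m (x * y) = x * sandwich m y.
Proof.
elim: m y => [|m IH] y Hx; first by rewrite !sandwich0.
rewrite doubleS in Hx.
have ca : GRing.comm x (g m.*2.+2) by apply/comm_g/Hx; lia.
have cb : GRing.comm x (g m.*2.+1) by apply/comm_g/Hx; lia.
rewrite !sandwichS -IH; last by move=> j Hj; apply: Hx; lia.
congr (sandwich m _); rewrite /pair_sandwich -[g _ * g _ * (x * y)]mulrA.
rewrite [g m.*2.+1 * (x * y)]mulrA -cb -[x * g _ * y]mulrA [g _ * (x * _)]mulrA -ca.
by rewrite !mulrA.
Qed.

Lemma sandwich_comm m x : (forall j, (1 <= j <= m.*2)%N -> GRing.comm x (u j)) ->
  sandwich m x = x * Veven m.
Proof. by move=> Hx; rewrite -[x in LHS]mulr1 sandwich_mull. Qed.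

Definition cz j := if j == 0%N then 1 else cosd j.
Definition hz j := if j == 0%N then 0 else sind j *: u j.

Lemma czS j : cz j.+1 = cosd j.+1. Proof. by []. Qed.
Lemma hzS j : hz j.+1 = sind j.+1 *: u j.+1. Proof. by []. Qed.

Lemma VevenS m : (m.*2.+2 <= N)%N -> Veven m.+1 =
  Veven m + sind m.*2.+2 *: sandwich m (u m.*2.+2)
    + (cosd m.*2.+2 * sind m.*2.+1) *: sandwich m (u m.*2.+1).
Proof.
move=> m_le; have c1 j : GRing.comm 1 (u j) by exact/commr_sym/commr1.
by rewrite /Veven sandwichS (pair_sandwich_cc m_le) // mul1r !sandwichD !sandwichZ.
Qed.

Lemma sandwich_u_odd m : (m.*2.+1 <= N)%N ->
  sandwich m (u m.*2.+1) = (cz m.*2 * cz (m.*2 - 1)%N) *: (u m.*2.+1 * Veven (m - 1)%N).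
Proof.
case: m => [|n] m_le.
  by rewrite sandwich0 double0 sub0n /cz /= mul1r scale1r Veven0 mulr1.
rewrite doubleS in m_le *.
have n_le : (n.*2.+2 <= N)%N by lia.
rewrite sandwichS (pair_sandwich_aa n_le); try by apply: u_anticomm; lia.
rewrite sandwichZ (sandwich_comm (m := n) (x := u n.*2.+3)) ?subSS ?subn0 //.
by move=> j Hj; apply: u_comm; lia.
Qed.

Lemma sandwich_u_pair m : (m.*2.+2 <= N)%N ->
  sandwich m (u m.*2.+1 * u m.*2.+2) = cz (m.*2 - 1)%N *: (u m.*2.+1 * u m.*2.+2 *
     (Veven m - (cz m.*2 * cz (m.*2 - 2)%N * cz (m.*2 - 3)%N)
                  *: (hz (m.*2 - 1)%N * Veven (m - 2)%N))).
Proof.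
case: m => [|n] m_le.
  by rewrite sandwich0 double0 !sub0n /hz /cz /= mul0r scaler0 subr0 Veven0 mulr1 scale1r.
rewrite doubleS in m_le *.
have n_le : (n.*2.+2 <= N)%N by lia.
have ya : GRing.comm (u n.*2.+3 * u n.*2.+4) (u n.*2.+2).
  by apply: anticomm2M; apply: u_anticomm; lia.
have yb : anticomm (u n.*2.+3 * u n.*2.+4) (u n.*2.+1).
  by apply: anticomm_commM; [apply: u_anticomm | apply: u_comm]; lia.
have yc j : (1 <= j <= n.*2)%N -> GRing.comm (u n.*2.+3 * u n.*2.+4) (u j).
  by move=> Hj; apply/commr_sym/commrM; apply: u_comm; lia.
rewrite sandwichS (pair_sandwich_ca n_le ya yb) sandwichZ (sandwich_mull _ yc).
rewrite sandwichD sandwichZ -/(Veven n).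
have -> : Veven n + sind n.*2.+2 *: sandwich n (u n.*2.+2) =
    Veven n.+1 - (cosd n.*2.+2 * sind n.*2.+1) *: sandwich n (u n.*2.+1).
  by rewrite (VevenS n_le) addrK.
rewrite sandwich_u_odd; last by lia.
rewrite !subSS !subn0 !czS hzS -scalerAl !scalerA.
by congr (_ *: (_ * (_ - _ *: _))); ring.
Qed.

Lemma sandwich_u_even m : (m.*2.+2 <= N)%N ->
  sandwich m (u m.*2.+2) = u m.*2.+2 * (cz m.*2 *: Veven (m - 1)%N
    + (cz (m.*2 - 2)%N * cz (m.*2 - 3)%N) *: (hz (m.*2 - 1)%N * Veven (m - 2)%N)
    + cz (m.*2 - 3)%N *: (hz (m.*2 - 1)%N * hz m.*2 * (Veven (m - 1)%N
        - (cz (m.*2 - 2)%N * cz (m.*2 - 4)%N * cz (m.*2 - 5)%N)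
            *: (hz (m.*2 - 3)%N * Veven (m - 3)%N)))).
Proof.
case: m => [|n] m_le.
  by rewrite sandwich0 double0 !sub0n /hz /cz /= !mul0r !scaler0 !addr0 Veven0 scale1r mulr1.
rewrite doubleS in m_le *.
have n_le : (n.*2.+2 <= N)%N by lia.
have ya : anticomm (u n.*2.+4) (u n.*2.+2) by apply: u_anticomm; lia.
have yb : GRing.comm (u n.*2.+4) (u n.*2.+1) by apply: u_comm; lia.
have yc j : (1 <= j <= n.*2)%N -> GRing.comm (u n.*2.+4) (u j).
  by move=> Hj; apply: u_comm; lia.
rewrite sandwichS (pair_sandwich_ac n_le ya yb) (sandwich_mull _ yc) !sandwichD !sandwichZ.
rewrite -/(Veven n) sandwich_u_pair // sandwich_u_odd; last by lia.
rewrite !subSS !subn0 !czS !hzS; congr (_ * (_ + _ + _)).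
  by rewrite -scalerAl !scalerA; congr (_ *: _); ring.
by rewrite -!scalerAl -!scalerAr -!scalerAl !scalerA; congr (_ *: _); ring.
Qed.

Lemma hz_rev3 m : (m.*2.+2 <= N)%N ->
  hz m.*2.+2 * hz (m.*2 - 1)%N * hz m.*2 = hz m.*2 * hz (m.*2 - 1)%N * hz m.*2.+2.
Proof.
case: m => [|n] m_le; first by rewrite double0 sub0n /hz /= !mulr0 !mul0r.
rewrite doubleS in m_le *; rewrite subSS subn0 !hzS.
rewrite -!scalerAl -!scalerAr -!scalerAl !scalerA; congr (_ *: _); first ring.
have e41 : GRing.comm (u n.*2.+4) (u n.*2.+1) by apply: u_comm; lia.
have e42 : anticomm (u n.*2.+4) (u n.*2.+2) by apply: u_anticomm; lia.
have e12 : anticomm (u n.*2.+1) (u n.*2.+2) by apply: u_anticomm; lia.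
by rewrite e41 -mulrA e42 mulrN mulrA e12 mulNr opprK.
Qed.

Lemma hz_rev4 m : (m.*2.+2 <= N)%N ->
  hz m.*2.+2 * hz (m.*2 - 1)%N * hz m.*2 * hz (m.*2 - 3)%N =
  - (hz (m.*2 - 3)%N * hz m.*2 * hz (m.*2 - 1)%N * hz m.*2.+2).
Proof.
case: m => [|[|n]] m_le.
- by rewrite double0 !sub0n /hz /= !mulr0 !mul0r oppr0.
- by rewrite /hz /= !mulr0 !mul0r oppr0.
rewrite !doubleS in m_le *; rewrite !subSS !subn0 !hzS.
rewrite -!scalerAl -!scalerAr -?scalerAl -?scalerAr -?scalerAl -?scalerAr !scalerA -scalerN.
congr (_ *: _); first ring.
have e63 : GRing.comm (u n.*2.+2.+4) (u n.*2.+3) by apply: u_comm; lia.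
have e64 : anticomm (u n.*2.+2.+4) (u n.*2.+4) by apply: u_anticomm; lia.
have e34 : anticomm (u n.*2.+3) (u n.*2.+4) by apply: u_anticomm; lia.
have rev3 : u n.*2.+2.+4 * u n.*2.+3 * u n.*2.+4 = u n.*2.+4 * u n.*2.+3 * u n.*2.+2.+4.
  by rewrite e63 -mulrA e64 mulrN mulrA e34 mulNr opprK.
have rev4 : anticomm (u n.*2.+2.+4 * u n.*2.+3 * u n.*2.+4) (u n.*2.+1).
  apply: anticomm_commM; last by apply: u_comm; lia.
  by apply: comm_anticommM; [apply: u_comm | apply: u_anticomm]; lia.
by rewrite rev4 rev3 !mulrA.
Qed.

Lemma Veven_recursion m : (m.*2.+2 <= N)%N ->
  Veven m.+1 = Veven m
    + (cz m.*2 *: hz m.*2.+2 + (cz m.*2.+2 * cz m.*2 * cz (m.*2 - 1)%N) *: hz m.*2.+1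
       + cz (m.*2 - 3)%N *: (hz m.*2 * hz (m.*2 - 1)%N * hz m.*2.+2)) * Veven (m - 1)%N
    + (cz (m.*2 - 2)%N * cz (m.*2 - 3)%N) *: (hz m.*2.+2 * hz (m.*2 - 1)%N) * Veven (m - 2)%N
    + (cz (m.*2 - 2)%N * cz (m.*2 - 3)%N * cz (m.*2 - 4)%N * cz (m.*2 - 5)%N)
        *: (hz (m.*2 - 3)%N * hz m.*2 * hz (m.*2 - 1)%N * hz m.*2.+2) * Veven (m - 3)%N.
Proof.
move=> m_le.
rewrite -(hz_rev3 m_le) -[hz (m.*2 - 3)%N * _ * _ * _]opprK -(hz_rev4 m_le).
rewrite (VevenS m_le) (sandwich_u_even m_le) sandwich_u_odd; last by lia.
rewrite !hzS !czS !mulrDr !mulrDl.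
do 6! rewrite -?scalerAl -?scalerAr ?mulrN ?mulNr ?scalerN ?scalerDr ?scalerA ?mulrDr ?mulrDl.
have regroup (a b c d e f : A) : (a + ((b + c) + (d - e))) + f = a + ((b + f) + d) + c - e.
  by rewrite (AC ((1*(2*2))*1) (((1*((2*6)*4))*3)*5))%AC.
rewrite !mulrA regroup.
by congr (_ + (_ *: _ + _ *: _ + _ *: _) + _ *: _ - _ *: _); ring.
Qed.

Lemma sandwich_g_sqr m : (m.*2.+1 <= N)%N ->
  sandwich m (g m.*2.+1 * g m.*2.+1) =
  Veven m + (cz m.*2 * cz (m.*2 - 1)%N) *: hz m.*2.+1 * Veven (m - 1)%N.
Proof.
move=> m_le; rewrite g_sqr; last by lia.
rewrite sandwichD sandwichZ -/(Veven m) sandwich_u_odd // hzS -!scalerAl !scalerA.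
by congr (_ + _ *: _); rewrite mulrC.
Qed.

End Brickwork.

Section ComplexTrig.
Variable R : realType.
Local Open Scope complex_scope.

Lemma Rcosh_sqrB_Rsinh_sqr (y : R) : Rcosh y ^+ 2 - Rsinh y ^+ 2 = 1.
Proof.
have ey : expR y != 0 by rewrite lt0r_neq0 // expR_gt0.
by rewrite /Rcosh /Rsinh expRN; field.
Qed.

Lemma RcoshDD (y : R) : Rcosh (y + y) = Rcosh y ^+ 2 + Rsinh y ^+ 2.
Proof. by rewrite /Rcosh /Rsinh opprD !expRD; field. Qed.

Lemma RsinhDD (y : R) : Rsinh (y + y) = 2 * Rsinh y * Rcosh y.
Proof. by rewrite /Rcosh /Rsinh opprD !expRD; field. Qed.

Lemma Ccos_sqrD_Csin_sqr (w : R[i]) : Ccos w ^+ 2 + Csin w ^+ 2 = 1.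
Proof.
case: w => x y; have c2s2 := cos2Dsin2 x; have ch2sh2 := Rcosh_sqrB_Rsinh_sqr y.
rewrite /Ccos /Csin /= !expr2; apply/eqP; rewrite eq_complex /=.
apply/andP; split; apply/eqP; last by ring.
transitivity ((cos x ^+ 2 + sin x ^+ 2) * (Rcosh y ^+ 2 - Rsinh y ^+ 2)); first by ring.
by rewrite c2s2 ch2sh2 mulr1.
Qed.

Lemma CcosDD (w : R[i]) : Ccos (w + w) = Ccos w ^+ 2 - Csin w ^+ 2.
Proof.
case: w => x y; rewrite /Ccos /Csin /=; apply/eqP; rewrite eq_complex /=.
by rewrite RcoshDD RsinhDD cosD sinD !expr2 /=; apply/andP; split; apply/eqP; ring.
Qed.

Lemma CsinDD (w : R[i]) : Csin (w + w) = 2 * Ccos w * Csin w.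
Proof.
case: w => x y; rewrite /Ccos /Csin /=; apply/eqP; rewrite eq_complex /=.
by rewrite RcoshDD RsinhDD cosD sinD !expr2 /=; apply/andP; split; apply/eqP; ring.
Qed.

Lemma Ccos0 : Ccos (0 : R[i]) = 1.
Proof.
apply/eqP; rewrite eq_complex /= /Rcosh /Rsinh oppr0 expR0 cos0 sin0 subrr.
by rewrite mul0r ?mulr0 oppr0 mul1r divff ?eqxx // -mulr2n pnatr_eq0.
Qed.

Lemma Csin0 : Csin (0 : R[i]) = 0.
Proof.
apply/eqP; rewrite eq_complex /= /Rcosh /Rsinh oppr0 expR0 cos0 sin0 subrr.
by rewrite ?mul0r ?mulr0 ?eqxx.
Qed.

End ComplexTrig.

Section Normalization.
Variables (R : realType) (A : algType R[i]) (h : nat -> A) (b : nat -> R[i]).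

Definition unorm j := (b j)^-1 *: h j.
Definition half_cos (theta : nat -> R[i]) j := Ccos (theta j / 2).
Definition half_sin (theta : nat -> R[i]) j := Csin (theta j / 2).

Lemma unormM i j : unorm i * unorm j = ((b i)^-1 * (b j)^-1) *: (h i * h j).
Proof. by rewrite /unorm -scalerAl -scalerAr scalerA. Qed.

Section FFDRelations.
Variable N : nat.
Hypothesis ffd : FFD h b N.

Lemma unorm_sqr j : (1 <= j <= N)%N -> b j != 0 -> unorm j * unorm j = 1.
Proof.
case: ffd => _ _ _ h_sqr j_range bj_neq0.
rewrite unormM -[h j * h j]expr2 h_sqr // scalerA.
have -> : (b j)^-1 * (b j)^-1 * b j ^+ 2 = 1 by field.
exact: scale1r.
Qed.

Lemma unorm_anticomm1 j : (1 <= j)%N -> (j + 1 <= N)%N -> anticomm (unorm j) (unorm (j + 1)).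
Proof. by case: ffd => h_ac1 _ _ _ *; rewrite /anticomm !unormM h_ac1 // scalerN mulrC. Qed.

Lemma unorm_anticomm2 j : (1 <= j)%N -> (j + 2 <= N)%N -> anticomm (unorm j) (unorm (j + 2)).
Proof. by case: ffd => _ h_ac2 _ _ *; rewrite /anticomm !unormM h_ac2 // scalerN mulrC. Qed.

Lemma unorm_comm_far i j : (1 <= i <= N)%N -> (1 <= j <= N)%N ->
  ((i + 2 < j)%N || (j + 2 < i)%N) -> GRing.comm (unorm i) (unorm j).
Proof. by case: ffd => _ _ h_comm _ *; rewrite /GRing.comm !unormM h_comm // mulrC. Qed.

End FFDRelations.

Lemma half_pythag theta j : half_cos theta j ^+ 2 + half_sin theta j ^+ 2 = 1.
Proof. exact: Ccos_sqrD_Csin_sqr. Qed.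

Local Notation ngate theta := (g unorm (half_cos theta) (half_sin theta)).

Lemma gate_unorm theta j : gate h b theta j = ngate theta j.
Proof. by rewrite /gate /g -lock /unorm scalerA. Qed.

Lemma cc_cz theta j : cc theta j = cz (half_cos theta) (half_sin theta) j.
Proof.
case: j => [//|j]; rewrite /cc /cz /cosd -lock /half_cos /half_sin.
by rewrite {1}(splitr (theta j.+1)) CcosDD.
Qed.

Lemma hp_hz theta j : hp h b theta j = hz unorm (half_cos theta) (half_sin theta) j.
Proof.
case: j => [//|j]; rewrite /hp /hz /sind -lock /half_cos /half_sin /unorm scalerA.
by rewrite {1}(splitr (theta j.+1)) CsinDD.
Qed.

Lemma Vev_Gprod theta n :
  Vev h b theta n = Gprod (gate h b theta) n * GprodT (gate h b theta) n.
Proof. by []. Qed.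

Lemma V_double theta n :
  V h b theta n.*2 = Veven unorm (half_cos theta) (half_sin theta) n.
Proof.
case: n => [|n]; first by rewrite /V /= Veven0.
rewrite /V doubleS /= odd_double /= doubleK Vev_Gprod /Veven /sandwich mulr1.
by have [-> ->] := eq_Gprod (m := n.+1) (fun j _ => gate_unorm theta j).
Qed.

Lemma V_double_succ theta m : V h b theta m.*2.+1 =
  sandwich unorm (half_cos theta) (half_sin theta) m (ngate theta m.*2.+1 * ngate theta m.*2.+1).
Proof.
rewrite /V /= odd_double /= doubleK /Vodd Vev_Gprod GprodS GprodTS.
set theta' := (fun j => _).
have last_gate : gate h b theta' m.*2.+2 = 1.
  by rewrite /gate /theta' doubleS eqxx mul0r Ccos0 Csin0 mul0r scale0r addr0 scale1r.
have odd_gate : gate h b theta' m.*2.+1 = ngate theta m.*2.+1.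
  by rewrite -gate_unorm /gate /theta' ifF // doubleS eqSS ltn_eqF.
have [-> ->] : Gprod (gate h b theta') m = Gprod (ngate theta) m /\
               GprodT (gate h b theta') m = GprodT (ngate theta) m.
  apply: eq_Gprod => j j_le; rewrite -gate_unorm /gate /theta' ifF //.
  by apply: ltn_eqF; rewrite doubleS; lia.
by rewrite last_gate odd_gate mul1r mulr1 /sandwich !mulrA.
Qed.

End Normalization.

Theorem mainTheorem11 (R : realType) (A : algType R[i])
    (h : nat -> A) (b theta : nat -> R[i]) (k : nat) :
  (1 <= k)%N ->
  FFD h b k.*2 ->
  (forall j, (1 <= j <= k.*2)%N -> b j != 0) ->
  (forall j, (1 <= j <= k.*2)%N -> Ccos (theta j) != 0) ->
  let c := cc theta in
  let h' := hp h b theta in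
  let V := V h b theta in
  V k.*2 =
    V (k.*2 - 2)%N
    + (c (k.*2 - 2)%N *: h' k.*2
       + (c k.*2 * c (k.*2 - 2)%N * c (k.*2 - 3)%N) *: h' (k.*2 - 1)%N
       + c (k.*2 - 5)%N *: (h' (k.*2 - 2)%N * h' (k.*2 - 3)%N * h' k.*2))
      * V (k.*2 - 4)%N
    + (c (k.*2 - 4)%N * c (k.*2 - 5)%N) *: (h' k.*2 * h' (k.*2 - 3)%N) * V (k.*2 - 6)%N
    + (c (k.*2 - 4)%N * c (k.*2 - 5)%N * c (k.*2 - 6)%N * c (k.*2 - 7)%N)
        *: (h' (k.*2 - 5)%N * h' (k.*2 - 2)%N * h' (k.*2 - 3)%N * h' k.*2) * V (k.*2 - 8)%N
  /\
  V (k.*2 - 1)%N =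
    V (k.*2 - 2)%N + (c (k.*2 - 2)%N * c (k.*2 - 3)%N) *: h' (k.*2 - 1)%N * V (k.*2 - 4)%N.
Proof.
move=> k_gt0 ffd b_neq0 _ c h' V.
case: k k_gt0 ffd b_neq0 => [//|m] _ ffd b_neq0.
pose u := unorm h b; pose al := half_cos theta; pose be := half_sin theta.
have u_sqr j : (1 <= j <= m.+1.*2)%N -> u j * u j = 1.
  by move=> j_range; apply: (unorm_sqr ffd) => //; exact: b_neq0.
have u_ac1 := unorm_anticomm1 ffd; have u_ac2 := unorm_anticomm2 ffd.
have u_far := unorm_comm_far ffd; have pythag := half_pythag theta.
have V_dbl n : V n.*2 = Veven u al be n := V_double h b theta n.
have V_dbl_sub i : V (m.*2 - i.*2)%N = Veven u al be (m - i) by rewrite -doubleB V_dbl.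
rewrite /c /h' !cc_cz !hp_hz doubleS !subSS !subn0.
split.
- rewrite (V_dbl m.+1) V_dbl (V_dbl_sub 1) (V_dbl_sub 2) (V_dbl_sub 3).
  by apply: (Veven_recursion u_sqr) => //; rewrite doubleS.
- rewrite [V _](V_double_succ h b theta m) V_dbl (V_dbl_sub 1).
  by apply: (sandwich_g_sqr u_sqr) => //; rewrite doubleS.
Qed.
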